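(* Let $n\ge1$ and let $x\in\mathcal{A}_n(\{0121,0112\})$. Let $x^+$ denote the subsequence of positive entries of $x$. Then exactly one of the following holds: (label $(0)$) $x=0^n$; (label $(01)$) $x^+=12\cdots m$ for some $m\ge1$; (label $(011)$) $x^+=12\cdots(m-1)m^s$ for some $m\ge1$ and $s\ge2$. Moreover, writing $m=\max(x)$, the letters $t$ for which the sequence $xt$ (obtained by appending $t$) lies in $\mathcal{A}_{n+1}(\{0121,0112\})$, together with the labels of the resulting $xt$, are exactly: - if $x$ has label $(0)$: $t=0$ (label $(0)$) and $t=1$ (label $(01)$); - if $x$ has label $(01)$: $t=0$ (label $(01)$), $t=m$ (label $(011)$), and $t=m+1$ (label $(01)$); - if $x$ has label $(011)$: $t=0$ and $t=m$, both giving label $(011)$.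
   Context: An ascent in an integer sequence $s_1\cdots s_m$ is an index $j$ with $s_j<s_{j+1}$; $\mathrm{asc}$ denotes the number of ascents. An ascent sequence is a sequence $x_1\cdots x_n$ of nonnegative integers with $x_1=0$ and $x_i\le 1+\mathrm{asc}(x_1\cdots x_{i-1})$ for all $i\ge2$. The reduction $\mathrm{red}(w)$ of an integer sequence $w$ replaces the $i$-th smallest distinct letter of $w$ by $i-1$; a pattern is a reduced sequence. A sequence $x$ contains a pattern $p=p_1\cdots p_k$ if there are indices $i_1<\cdots<i_k$ with $\mathrm{red}(x_{i_1}\cdots x_{i_k})=p$; otherwise $x$ avoids $p$. For a finite set $P$ of patterns, $\mathcal{A}_n(P)$ denotes the set of ascent sequences of length $n$ avoiding every pattern in $P$. Here $c^s$ denotes $s$ consecutive copies of the letter $c$. *)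

From mathcomp Require Import all_boot.
Set Implicit Arguments. Unset Strict Implicit. Unset Printing Implicit Defensive.

Definition asc (s : seq nat) : nat :=
  count (fun p : nat * nat => p.1 < p.2) (zip s (behead s)).

(* ascent sequence: x_1 = 0 and x_i <= 1 + asc(x_1..x_{i-1}) for i >= 2
   (0-indexed: for 1 <= i < size x, nth 0 x i <= 1 + asc (take i x)). *)
Definition ascent_seq (x : seq nat) : Prop :=
  head 1 x = 0 /\
  forall i, 1 <= i < size x -> nth 0 x i <= (asc (take i x)).+1.

Definition red (w : seq nat) : seq nat :=
  map (fun a => index a (sort leq (undup w))) w.

Definition contains (x p : seq nat) : Prop :=
  exists s, subseq s x /\ red s = p.

Definition avoids (x : seq nat) (P : seq (seq nat)) : Prop :=
  forall p, p \in P -> ~ contains x p.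

Definition inA (n : nat) (P : seq (seq nat)) (x : seq nat) : Prop :=
  size x = n /\ ascent_seq x /\ avoids x P.

Definition P3 : seq (seq nat) := [:: [:: 0; 1; 2; 1]; [:: 0; 1; 1; 2]].

Definition xplus (x : seq nat) : seq nat := filter (fun a => 0 < a) x.

Definition maxseq (x : seq nat) : nat := foldr maxn 0 x.

Inductive Label := L0 | L01 | L011.

Definition has_label (x : seq nat) (l : Label) : Prop :=
  match l with
  | L0 => x = nseq (size x) 0
  | L01 => exists m, 1 <= m /\ xplus x = iota 1 m
  | L011 => exists m s, 1 <= m /\ 2 <= s /\ xplus x = iota 1 m.-1 ++ nseq s m
  end.

Definition trans (l : Label) (m t : nat) (l' : Label) : Prop :=
  match l with
  | L0 => (t = 0 /\ l' = L0) \/ (t = 1 /\ l' = L01)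
  | L01 => (t = 0 /\ l' = L01) \/ (t = m /\ l' = L011) \/ (t = m.+1 /\ l' = L01)
  | L011 => (t = 0 /\ l' = L011) \/ (t = m /\ l' = L011)
  end.

From mathcomp Require Import all_boot zify.
Set Implicit Arguments.
Unset Strict Implicit.
Unset Printing Implicit Defensive.

(* An ascent sequence starts with 0, so it contains 0121 or 0112 exactly when
   its positive part x^+ contains b c b or b b c for some 0 < b < c.  Hence
   x^+ repeats no letter but its maximum: the three labels say that x^+ is a
   staircase 1 2 ... (m-1) m^s with s = 0, s = 1 or s >= 2, and every such x
   avoids both patterns.  When appending t to such an x, a letter 0 < t < m
   creates 0 t m t, a letter t > m after m m creates 0 m m t, and when
   x^+ = 1 2 ... m the ascent condition reads t <= m + 1, since asc x = m. *)

Lemma sort_undup_ltn_sorted (s : seq nat) : sorted ltn (sort leq (undup s)).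
Proof.
by rewrite ltn_sorted_uniq_leq sort_uniq undup_uniq (sort_sorted leq_total).
Qed.

Lemma red_sorted_mem (s u : seq nat) :
  sorted ltn u -> s =i u -> red s = map (index^~ u) s.
Proof.
move=> su su_eq.
rewrite /red (irr_sorted_eq ltn_trans ltnn (sort_undup_ltn_sorted s) su) //.
by move=> y; rewrite mem_sort mem_undup su_eq.
Qed.

Lemma red_abcb a b c : a < b < c -> red [:: a; b; c; b] = [:: 0; 1; 2; 1].
Proof.
move=> /andP[ab bc]; have ac := ltn_trans ab bc.
rewrite (@red_sorted_mem _ [:: a; b; c]) /= ?ab ?bc //.
  by rewrite !eqxx (ltn_eqF ab) (ltn_eqF bc) (ltn_eqF ac).
by move=> y; rewrite !inE; case: (y == a) (y == b) (y == c) => [] [] [].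
Qed.

Lemma red_abbc a b c : a < b < c -> red [:: a; b; b; c] = [:: 0; 1; 1; 2].
Proof.
move=> /andP[ab bc]; have ac := ltn_trans ab bc.
rewrite (@red_sorted_mem _ [:: a; b; c]) /= ?ab ?bc //.
  by rewrite !eqxx (ltn_eqF ab) (ltn_eqF bc) (ltn_eqF ac).
by move=> y; rewrite !inE; case: (y == a) (y == b) (y == c) => [] [] [].
Qed.

Lemma size_red s : size (red s) = size s.
Proof. exact: size_map. Qed.

Lemma nth_red_lt s i j : i < size s -> j < size s ->
  nth 0 (red s) i < nth 0 (red s) j -> nth 0 s i < nth 0 s j.
Proof.
move=> si sj; rewrite /red !(nth_map 0) //.
set u := sort leq (undup s); have su : sorted ltn u := sort_undup_ltn_sorted s.
have mem_u k : k < size s -> nth 0 s k \in u.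
  by move=> sk; rewrite mem_sort mem_undup mem_nth.
move=> lt_ij; rewrite -(nth_index 0 (mem_u i si)) -(nth_index 0 (mem_u j sj)).
by apply: (sorted_ltn_nth ltn_trans) => //; rewrite inE index_mem mem_u.
Qed.

Lemma nth_red_eq s i j : i < size s -> j < size s ->
  nth 0 (red s) i = nth 0 (red s) j -> nth 0 s i = nth 0 s j.
Proof.
move=> si sj; rewrite /red !(nth_map 0) // => eq_ij.
by rewrite -(nth_index 0 (_ : nth 0 s i \in sort leq (undup s))) ?eq_ij ?nth_index //
  mem_sort mem_undup mem_nth.
Qed.

Lemma contains_0121P x :
  contains x [:: 0; 1; 2; 1] <-> exists a b c, a < b < c /\ subseq [:: a; b; c; b] x.
Proof.
split=> [[s [sub_sx red_s]] | [a [b [c [abc sub]]]]]; last first.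
  by exists [:: a; b; c; b]; rewrite red_abcb.
move: (size_red s) (@nth_red_lt s) (@nth_red_eq s) sub_sx; rewrite red_s.
case: s {red_s} => [|a [|b [|c [|d []]]]] //= _ lt_red eq_red sub_sx.
have ab : a < b := lt_red 0 1 erefl erefl erefl.
have bc : b < c := lt_red 1 2 erefl erefl erefl.
have db : d = b := eq_red 3 1 erefl erefl erefl.
by subst d; exists a, b, c; rewrite ab bc.
Qed.

Lemma contains_0112P x :
  contains x [:: 0; 1; 1; 2] <-> exists a b c, a < b < c /\ subseq [:: a; b; b; c] x.
Proof.
split=> [[s [sub_sx red_s]] | [a [b [c [abc sub]]]]]; last first.
  by exists [:: a; b; b; c]; rewrite red_abbc.
move: (size_red s) (@nth_red_lt s) (@nth_red_eq s) sub_sx; rewrite red_s.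
case: s {red_s} => [|a [|b [|c [|d []]]]] //= _ lt_red eq_red sub_sx.
have ab : a < b := lt_red 0 1 erefl erefl erefl.
have bd : b < d := lt_red 1 3 erefl erefl erefl.
have cb : c = b := eq_red 2 1 erefl erefl erefl.
by subst c; exists a, b, d; rewrite ab bd.
Qed.

Lemma avoids_subseq x y P : subseq x y -> avoids y P -> avoids x P.
Proof.
move=> xy avoid_y p pP [s [sx red_s]]; apply: (avoid_y p pP).
by exists s; split=> //; apply: subseq_trans sx xy.
Qed.

Lemma maxseq_eq s M : M \in s -> (forall y, y \in s -> y <= M) -> maxseq s = M.
Proof.
rewrite /maxseq foldrE => Ms leM; apply/eqP; rewrite eqn_leq leq_bigmax_seq // andbT.
by apply/bigmax_leqP_seq => y ys _; apply: leM.
Qed.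

Lemma maxseq_xplus x : maxseq (xplus x) = maxseq x.
Proof.
by rewrite /maxseq !foldrE big_filter big_mkcond; apply: eq_bigr => -[].
Qed.

Lemma xplus_rcons x t :
  xplus (rcons x t) = if 0 < t then rcons (xplus x) t else xplus x.
Proof. exact: filter_rcons. Qed.

Definition staircase (m s : nat) : seq nat := iota 1 m.-1 ++ nseq s m.

Lemma rcons_iota m : rcons (iota 1 m) m.+1 = iota 1 m.+1.
Proof. by rewrite -cats1 -[m.+1]addn1 iotaD add1n addn1. Qed.

Lemma iota_staircase m : 0 < m -> iota 1 m = staircase m 1.
Proof. by case: m => // m _; rewrite -rcons_iota -cats1. Qed.

Lemma rcons_staircase m s : rcons (staircase m s) m = staircase m s.+1.
Proof. by rewrite /staircase rcons_cat -cats1 -[s.+1]addn1 nseqD. Qed.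

Lemma mem_staircase c m s : c \in staircase m s -> c <= m.
Proof.
by rewrite mem_cat mem_iota mem_nseq => /orP[|/andP[_ /eqP->//]]; lia.
Qed.

Lemma count_staircase_gt1 b m s : 1 < count_mem b (staircase m s) -> b = m.
Proof.
rewrite count_cat count_nseq count_uniq_mem ?iota_uniq //=.
by case: (m =P b) => [-> //|_]; rewrite mul0n addn0; case: (b \in _).
Qed.

Lemma maxseq_staircase m s : 0 < s -> maxseq (staircase m s) = m.
Proof.
move=> s_gt0; apply: maxseq_eq => [|y]; last exact: mem_staircase.
by rewrite mem_cat mem_nseq eqxx s_gt0 orbT.
Qed.

Lemma subseq_staircase_lt b m s :
  0 < b < m -> 0 < s -> subseq [:: b; m] (staircase m s).
Proof.
move=> b_lt s_gt0; rewrite /staircase; apply: (@cat_subseq _ [:: b] [:: m]).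
  by rewrite sub1seq mem_iota; lia.
by rewrite sub1seq mem_nseq eqxx s_gt0.
Qed.

Lemma subseq_staircase_mm m s : 1 < s -> subseq [:: m; m] (staircase m s).
Proof.
move=> s_gt1; rewrite /staircase.
apply: (@cat_subseq _ [::] [:: m; m]); first exact: sub0seq.
by rewrite -(subnKC s_gt1) nseqD prefix_subseq.
Qed.

Lemma asc_cons2 a b s : asc [:: a, b & s] = (a < b) + asc (b :: s).
Proof. by []. Qed.

Lemma leq_asc_cat s u : asc s <= asc (s ++ u).
Proof.
case: s => [//|a s]; elim: s a => [//|b s IHs] a.
by rewrite !cat_cons !asc_cons2 leq_add2l -cat_cons IHs.
Qed.

(* Every positive letter of [s] ends an ascent, its predecessor being 0 or a
   smaller positive letter, and no zero does. *)
Lemma asc_sorted_xplus a s :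
  sorted ltn (xplus (a :: s)) -> asc (a :: s) = size (xplus s).
Proof.
elim: s a => [//|b s IHs] a sorted_as.
have sorted_bs : sorted ltn (xplus (b :: s)).
  by move: sorted_as; rewrite /xplus /=; case: (0 < a) => //; apply: path_sorted.
rewrite asc_cons2 IHs //; case: b sorted_as sorted_bs => [|b] //= sorted_as _.
by case: a sorted_as => [|a] //= /andP[-> _].
Qed.

Lemma asc_iota s m : xplus (0 :: s) = iota 1 m -> asc (0 :: s) = m.
Proof.
move=> xs; rewrite asc_sorted_xplus ?xs ?iota_ltn_sorted //.
by rewrite -[xplus s]/(xplus (0 :: s)) xs size_iota.
Qed.

Lemma ascent_seq_leq x y : ascent_seq x -> y \in x -> y <= (asc x).+1.
Proof.
move=> [x0 x_le] yx; rewrite -(nth_index 0 yx).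
case i_def: (index y x) => [|i].
  by case: x x0 {x_le yx i_def} => //= a s ->.
have i_lt : i.+1 < size x by rewrite -i_def index_mem.
apply: leq_trans (x_le i.+1 i_lt) _.
by rewrite ltnS -{2}(cat_take_drop i.+1 x) leq_asc_cat.
Qed.

Lemma maxseq_leq_asc x : ascent_seq x -> maxseq x <= (asc x).+1.
Proof.
move=> asc_x; rewrite /maxseq foldrE.
by apply/bigmax_leqP_seq => y yx _; apply: ascent_seq_leq.
Qed.

Lemma ascent_seq_head x : ascent_seq x -> x = 0 :: behead x.
Proof. by case: x => [[]|a s [/= ->]]. Qed.

Lemma ascent_seq_rcons a s t :
  ascent_seq (rcons (a :: s) t) <-> ascent_seq (a :: s) /\ t <= (asc (a :: s)).+1.
Proof.
rewrite /ascent_seq (_ : head 1 (rcons (a :: s) t) = head 1 (a :: s)) //.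
move: (a :: s) (ltn0Sn (size s) : 0 < size (a :: s)) => x x_gt0.
rewrite -cats1 size_cat /= addn1.
split=> [[x0 le_xt] | [[x0 le_x] le_t]].
- split; first split=> // [i /andP[i_gt0 i_lt]].
  + have i_lt' : 0 < i < (size x).+1 by rewrite i_gt0 ltnS ltnW.
    by move: (le_xt i i_lt'); rewrite nth_cat i_lt takel_cat // (ltnW i_lt).
  + have x_lt : 0 < size x < (size x).+1 by rewrite x_gt0 ltnSn.
    by move: (le_xt _ x_lt); rewrite nth_cat ltnn subnn takel_cat ?take_size.
- split=> // i /andP[i_gt0 i_lt].
  rewrite nth_cat takel_cat; last by rewrite -ltnS.
  case: ltnP => i_ge.
    by apply: le_x; rewrite i_gt0.
  have -> : i = size x by apply/eqP; rewrite eqn_leq i_ge andbT -ltnS.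
  by rewrite subnn take_size.
Qed.

Lemma staircase_avoids x m s : xplus x = staircase m s -> avoids x P3.
Proof.
move=> xs p; rewrite !inE.
have no_pattern b c u :
    b < c -> c \in u -> 1 < count_mem b u -> subseq u (xplus x) -> False.
  move=> bc cu bu; rewrite xs => sub.
  have /count_staircase_gt1 bm := leq_trans bu (leq_count_subseq _ sub).
  by have /mem_staircase := mem_subseq sub cu; rewrite -bm leqNgt bc.
case/orP=> /eqP-> .
- case/contains_0121P=> a [b [c [/andP[ab bc] sub]]].
  have b_gt0 := leq_ltn_trans (leq0n a) ab; have c_gt0 := ltn_trans b_gt0 bc.
  apply: (no_pattern b c [:: b; c; b]) => //.
  + by rewrite !inE eqxx orbT.
  + by rewrite /= eqxx (gtn_eqF bc).
  + rewrite /xplus subseq_filter /= b_gt0 c_gt0.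
    exact: subseq_trans (subseq_cons _ a) sub.
- case/contains_0112P=> a [b [c [/andP[ab bc] sub]]].
  have b_gt0 := leq_ltn_trans (leq0n a) ab; have c_gt0 := ltn_trans b_gt0 bc.
  apply: (no_pattern b c [:: b; b; c]) => //.
  + by rewrite !inE eqxx !orbT.
  + by rewrite /= eqxx (gtn_eqF bc).
  + rewrite /xplus subseq_filter /= b_gt0 c_gt0.
    exact: subseq_trans (subseq_cons _ a) sub.
Qed.

Lemma has_label_staircase x l : has_label x l -> exists m s, xplus x = staircase m s.
Proof.
case: l => /=.
- by move=> ->; exists 0, 0; rewrite /xplus filter_nseq.
- by move=> [m [m_gt0 ->]]; exists m, 1; rewrite iota_staircase.
- by move=> [m [s [_ [_ ->]]]]; exists m, s.
Qed.

Lemma has_label_avoids x l : has_label x l -> avoids x P3.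
Proof. by case/has_label_staircase=> m [s]; apply: staircase_avoids. Qed.

Definition label_of (x : seq nat) : Label :=
  if xplus x == [::] then L0 else if uniq (xplus x) then L01 else L011.

Lemma has_label_label_of x l : has_label x l -> l = label_of x.
Proof.
rewrite /label_of; case: l => /=.
- by move=> ->; rewrite /xplus filter_nseq.
- by move=> [m [m_gt0 ->]]; rewrite iota_uniq; case: m m_gt0.
- move=> [m [[|[|s]] [_ [// _ ->]]]].
  have -> : (iota 1 m.-1 ++ nseq s.+2 m == [::]) = false.
    by rewrite -size_eq0 size_cat size_nseq addnS.
  suff /negbTE-> : ~~ uniq (iota 1 m.-1 ++ nseq s.+2 m) by [].
  by apply/negP => /(subseq_uniq (suffix_subseq _ _)); rewrite /= inE eqxx.
Qed.

Lemma maxseq_iota m : maxseq (iota 1 m) = m.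
Proof. by case: m => // m; rewrite iota_staircase // maxseq_staircase. Qed.

Lemma has_label_rcons x l t l' :
  has_label x l -> trans l (maxseq x) t l' -> has_label (rcons x t) l'.
Proof.
case: l => /=.
- move=> x0 [[-> ->] | [-> ->]] /=.
  + by rewrite size_rcons {1}x0 -cats1 -addn1 nseqD.
  + by exists 1; rewrite xplus_rcons x0 /xplus filter_nseq.
- move=> [m [m_gt0 xs]]; rewrite -maxseq_xplus xs maxseq_iota.
  move=> [[-> ->] | [[-> ->] | [-> ->]]] /=.
  + by exists m; rewrite xplus_rcons.
  + by exists m, 2; rewrite xplus_rcons m_gt0 xs iota_staircase // rcons_staircase.
  + by exists m.+1; rewrite xplus_rcons xs rcons_iota.
- move=> [m [s [m_gt0 [s_ge2 xs]]]].
  rewrite -maxseq_xplus xs maxseq_staircase ?(ltnW s_ge2) //.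
  move=> [[-> ->] | [-> ->]] /=.
  + by exists m, s; rewrite xplus_rcons.
  + by exists m, s.+1; rewrite xplus_rcons m_gt0 xs rcons_staircase ltnW.
Qed.

Section Extension.

Variables (x' : seq nat) (t : nat).
Hypothesis avoid_xt : avoids (rcons (0 :: x') t) P3.

Lemma avoid_0121_rcons c : 0 < t -> subseq [:: t; c] (xplus (0 :: x')) -> c <= t.
Proof.
move=> t_gt0 sub; rewrite leqNgt; apply/negP=> tc.
apply: (@avoid_xt [:: 0; 1; 2; 1]); first by rewrite inE eqxx.
apply/contains_0121P; exists 0, t, c; rewrite t_gt0 tc; split=> //.
rewrite -cats1 /=.
exact: (cat_subseq (subseq_trans sub (filter_subseq _ x')) (subseq_refl [:: t])).
Qed.

Lemma avoid_0112_rcons b : 0 < b -> subseq [:: b; b] (xplus (0 :: x')) -> t <= b.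
Proof.
move=> b_gt0 sub; rewrite leqNgt; apply/negP=> bt.
apply: (@avoid_xt [:: 0; 1; 1; 2]); first by rewrite !inE eqxx orbT.
apply/contains_0112P; exists 0, b, t; rewrite b_gt0 bt; split=> //.
rewrite -cats1 /=.
exact: (cat_subseq (subseq_trans sub (filter_subseq _ x')) (subseq_refl [:: t])).
Qed.

Lemma avoid_rcons_trans l : has_label (0 :: x') l -> t <= (asc (0 :: x')).+1 ->
  exists l', trans l (maxseq (0 :: x')) t l'.
Proof.
case: l => [x0 | [m [m_gt0 xs]] | [m [s [m_gt0 [s_ge2 xs]]]]] t_le.
- have xs : xplus (0 :: x') = iota 1 0 by rewrite x0 /xplus /= filter_nseq.
  rewrite (asc_iota xs) in t_le.
  by case: t t_le => [|[|]] // _; [exists L0; left | exists L01; right].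
- rewrite -maxseq_xplus xs maxseq_iota; rewrite (asc_iota xs) in t_le.
  have [-> | t_gt0] := posnP t; first by exists L01; left.
  case: (ltngtP t m) => [tm | mt | ->].
  + suff : m <= t by rewrite leqNgt tm.
    apply: (avoid_0121_rcons t_gt0).
    by rewrite xs iota_staircase // subseq_staircase_lt // t_gt0 tm.
  + by exists L01; right; right; split=> //; apply/eqP; rewrite eqn_leq t_le.
  + by exists L011; right; left.
- rewrite -maxseq_xplus xs maxseq_staircase ?(ltnW s_ge2) //.
  have [-> | t_gt0] := posnP t; first by exists L011; left.
  case: (ltngtP t m) => [tm | mt | ->].
  + suff : m <= t by rewrite leqNgt tm.
    apply: (avoid_0121_rcons t_gt0).
    by rewrite xs subseq_staircase_lt ?t_gt0 ?tm // ltnW.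
  + suff : t <= m by rewrite leqNgt mt.
    by apply: (avoid_0112_rcons m_gt0); rewrite xs subseq_staircase_mm.
  + by exists L011; right.
Qed.

End Extension.

Lemma trans_leq_asc x' l t l' : ascent_seq (0 :: x') -> has_label (0 :: x') l ->
  trans l (maxseq (0 :: x')) t l' -> t <= (asc (0 :: x')).+1.
Proof.
move=> asc_x; case: l => [_ | [m [_ xs]] | [m [s [_ [s_ge2 xs]]]]].
- by case=> -[-> _].
- rewrite (asc_iota xs) -maxseq_xplus xs maxseq_iota.
  by case=> [[-> _] | [[-> _] | [-> _]]] //; apply: leqW.
- have := maxseq_leq_asc asc_x.
  rewrite -maxseq_xplus xs maxseq_staircase ?(ltnW s_ge2) // => m_le.
  by case=> -[-> _].
Qed.

Lemma inA_has_label n x : inA n.+1 P3 x -> exists l, has_label x l.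
Proof.
elim: n x => [|n IHn] x [size_x [asc_x avoid_x]].
  by case: x size_x asc_x {avoid_x} => [|a []] // _ [/= -> _]; exists L0.
case/lastP: x size_x asc_x avoid_x => [//|[//|a y] t]; rewrite size_rcons => -[size_y].
move=> /ascent_seq_rcons[asc_y t_le] avoid_yt.
have [l yl] : exists l, has_label (a :: y) l.
  apply: IHn; split; first by rewrite /= size_y.
  by split=> //; apply: avoids_subseq (subseq_rcons _ t) avoid_yt.
have a0 : a = 0 by case: asc_y.
subst a; have [l' tr] := avoid_rcons_trans avoid_yt yl t_le.
by exists l'; apply: has_label_rcons yl tr.
Qed.

Theorem lemma3p3 (n : nat) (x : seq nat) :
  1 <= n -> inA n P3 x ->
  (exists l, has_label x l /\ forall l', has_label x l' -> l' = l) /\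
  (forall l, has_label x l ->
     forall t : nat,
       (inA n.+1 P3 (rcons x t) <-> exists l', trans l (maxseq x) t l') /\
       (forall l', trans l (maxseq x) t l' -> has_label (rcons x t) l')).
Proof.
move=> n_gt0 Ax; have [size_x [asc_x _]] := Ax.
split.
  have [l xl] : exists l, has_label x l by apply: (@inA_has_label n.-1); rewrite prednK.
  by exists l; split=> // l' /has_label_label_of->; rewrite (has_label_label_of xl).
move=> l xl t; split; last by move=> l'; apply: has_label_rcons.
move: (behead x) (ascent_seq_head asc_x) => x' x_def; subst x.
split=> [[_ [/ascent_seq_rcons[_ t_le] avoid_xt]] | [l' tr]].
  exact: (avoid_rcons_trans avoid_xt xl t_le).
split; first by rewrite size_rcons size_x.
split; last exact: has_label_avoids (has_label_rcons xl tr).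
by apply/ascent_seq_rcons; split; last exact: trans_leq_asc asc_x xl tr.
Qed.
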